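(* Let $x \geq 1$ and $m \geq 1$ be integers. For $k \geq 1$, let $\mathcal{C}_{k,x}$ be the set of binary words of length $k$ containing no pattern from $\mathcal{T}_x = \{0\mathbf{1}^y0,\ 1\mathbf{0}^y1 : 1\le y\le x\}$ as a contiguous substring, listed in increasing lexicographic order (equivalently, increasing order as binary numbers with the leftmost bit most significant), and let $g(k,x,\mathbf{c}) \in \{0,1,\dots,N(k,x)-1\}$ be the position (index, starting from $0$) of $\mathbf{c}$ in this list, where $N(k,x)=|\mathcal{C}_{k,x}|$ for $k\ge 1$ and $N(k,x)\triangleq 2$ for all integers $k\le 1$. Let $\mathbf{c}' \in \mathcal{C}_{m+1,x}$, let $\mathbf{c}$ be the word formed by the $m$ rightmost bits of $\mathbf{c}'$, and (when $m-x\ge 1$) let $\mathbf{c}''$ be the word formed by the $m-x$ rightmost bits of $\mathbf{c}'$. Then: (1) if $\mathbf{c}'$ begins with $00$, then $g(m+1,x,\mathbf{c}') = g(m,x,\mathbf{c})$; (2) if $\mathbf{c}'$ begins with $0\mathbf{1}^{x+1}$, then $g(m+1,x,\mathbf{c}') = g(m,x,\mathbf{c}) - \tfrac12\left[N(m,x)-N(m-x,x)\right]$; (3) if $\mathbf{c}'$ begins with $\mathbf{1}^y\mathbf{0}^{x+1}$ for some $2 \le y \le x+1$, then $g(m+1,x,\mathbf{c}') = g(m,x,\mathbf{c}) + N(m-x,x)$; (4) if $\mathbf{c}'$ begins with $1\mathbf{0}^{x+1}$, then $g(m+1,x,\mathbf{c}') = g(m-x,x,\mathbf{c}'') + \tfrac12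 N(m+1,x)$; (5) if $\mathbf{c}'$ begins with $1\mathbf{1}^{x+1}$, then $g(m+1,x,\mathbf{c}') = g(m-x,x,\mathbf{c}'') + N(m,x)$. (In each case the words $\mathbf{c}$, $\mathbf{c}''$ belong to $\mathcal{C}_{m,x}$, $\mathcal{C}_{m-x,x}$ respectively.)
   Context: $\mathbf{0}^r$ (resp. $\mathbf{1}^r$) denotes a run of $r$ consecutive $0$'s (resp. $1$'s). ''Begins with'' a pattern means the leftmost bits of the word equal that pattern (so the case is vacuous if the pattern is longer than $m+1$). *)

(* Binary words are [seq bool] with [false] = 0, [true] = 1,
   leftmost element = leftmost (most significant) bit. *)
From mathcomp Require Import all_boot all_order all_algebra.
Set Implicit Arguments. Unset Strict Implicit. Unset Printing Implicit Defensive.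

Definition bin (k i : nat) : seq bool :=
  [seq odd (i %/ 2 ^ (k - 1 - j)) | j <- iota 0 k].

Definition pat0 (y : nat) : seq bool := false :: nseq y true ++ [:: false].
Definition pat1 (y : nat) : seq bool := true :: nseq y false ++ [:: true].

Definition avoidsT (x : nat) (w : seq bool) : bool :=
  all (fun y => ~~ infix (pat0 y) w && ~~ infix (pat1 y) w) (iota 1 x).

Definition Clist (k x : nat) : seq (seq bool) :=
  [seq w <- [seq bin k i | i <- iota 0 (2 ^ k)] | avoidsT x w].

Definition g (k x : nat) (c : seq bool) : nat := index c (Clist k x).

Definition N (k : int) (x : nat) : nat :=
  if (1 < k)%R then size (Clist `|k|%N x) else 2.

Definition rightmost (r : nat) (w : seq bool) : seq bool := drop (size w - r) w.

(* In lexicographic order, the rank of the word b :: w among the admissible words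
   is the rank of w among the admissible continuations of the prefix [:: b], plus,
   when b = 1, the number of admissible words starting with 0.  Which continuations
   are admissible depends on the prefix only through three facts: a repeated bit
   can be dropped (00 ~ 0, 11 ~ 1); a run of x+1 equal bits forgets the bit before
   it (1 0^(x+1) ~ 0, 0 1^(x+1) ~ 1); and 0 1^j 0, 1 0^j 1 with 1 <= j <= x admit
   no continuation.  Complementing all bits gives N(k+1,x) = 2 h(k), where
   h(k) = [ext1 k] counts the admissible words of length k+1 starting with 1, and
   the facts above give h(x+k+1) = h(x+k) + h(k). *)

From mathcomp Require Import all_boot all_order all_algebra.
From mathcomp Require Import zify lra.
Import GRing.Theory Num.Theory.

Set Implicit Arguments.
Unset Strict Implicit.
Unset Printing Implicit Defensive.

Lemma prefix_map_inj (T U : eqType) (f : T -> U) : injective f ->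
  forall s t, prefix (map f s) (map f t) = prefix s t.
Proof. by move=> f_inj s t; elim: t s => [|b t IH] [|a s] //=; rewrite inj_eq // IH. Qed.

Lemma infix_map_inj (T U : eqType) (f : T -> U) : injective f ->
  forall s t, infix (map f s) (map f t) = infix s t.
Proof.
move=> f_inj s t; elim: t => [|b t IH]; first by case: s.
by rewrite map_cons !infix_consl -map_cons prefix_map_inj // IH.
Qed.

Lemma nseqSr (T : Type) n (a : T) : nseq n.+1 a = rcons (nseq n a) a.
Proof. by elim: n => //= n <-. Qed.

Lemma rightmost_cat r s t : size t = r -> rightmost r (s ++ t) = t.
Proof. by move=> <-; rewrite /rightmost size_cat addnK drop_size_cat. Qed.

Lemma rightmost_run (b b' : bool) k d :
  rightmost (size d).+1 (b :: nseq k.+1 b' ++ d) = b' :: d.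
Proof. by rewrite nseqSr cat_rcons -cat_cons rightmost_cat. Qed.

Fixpoint words k : seq (seq bool) :=
  if k is k'.+1 then map (cons false) (words k') ++ map (cons true) (words k')
  else [:: [::]].

Lemma mem_words k w : (w \in words k) = (size w == k).
Proof.
elim: k w => [|k IH] [|b w] //=; rewrite mem_cat.
  by apply/negbTE; rewrite negb_or; apply/andP; split; apply/mapP => -[].
have mem_map_cons b1 b2 v :
    (b1 :: v \in map (cons b2) (words k)) = (b1 == b2) && (size v == k).
  by rewrite -IH; apply/mapP/andP => [[u hu [-> ->]] | [/eqP -> hv]]; last exists v.
by rewrite !mem_map_cons eqSS; case: b; rewrite ?orbF.
Qed.

Lemma bin_lt k i : i < 2 ^ k -> bin k.+1 i = false :: bin k i.
Proof.
move=> lt_i; rewrite /bin /= subn0 subn1 /= divn_small //; congr (_ :: _).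
rewrite (iotaDl 1 0 k) -map_comp; apply/eq_map => j /=.
by rewrite subnDA.
Qed.

Lemma bin_addX k i : i < 2 ^ k -> bin k.+1 (2 ^ k + i) = true :: bin k i.
Proof.
move=> lt_i; rewrite /bin /= subn0 subn1 /= divnDl // divnn expn_gt0 /= divn_small //.
congr (_ :: _); rewrite (iotaDl 1 0 k) -map_comp; apply/eq_in_map => j.
rewrite mem_iota /= => lt_j; have le_e : k - 1 - j <= k by lia.
rewrite subnDA divnDl ?dvdn_exp2l // oddD -expnB // oddX.
by have -> : (k - (k - 1 - j) == 0) = false by lia.
Qed.

Lemma map_bin_iota k : [seq bin k i | i <- iota 0 (2 ^ k)] = words k.
Proof.
elim: k => [|k IH] //=.
rewrite expnS mul2n -addnn iotaD map_cat add0n -IH -!map_comp; congr (_ ++ _).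
  by apply/eq_in_map => i; rewrite mem_iota /= => lt_i; rewrite bin_lt.
rewrite -{1}(addn0 (2 ^ k)) iotaDl -map_comp.
by apply/eq_in_map => i; rewrite mem_iota /= => lt_i; rewrite bin_addX.
Qed.

Section Ranking.
Variable P : pred (seq bool).

Definition ext p k := count (fun v => P (p ++ v)) (words k).

Definition rank p w := index w [seq v <- words (size w) | P (p ++ v)].

Definition same_ext p q := forall v, P (p ++ v) = P (q ++ v).

Lemma ext0 p : ext p 0 = P p.
Proof. by rewrite /ext /= cats0 addn0. Qed.

Lemma extS p k : ext p k.+1 = ext (rcons p false) k + ext (rcons p true) k.
Proof.
rewrite /ext /= count_cat !count_map.
by congr (_ + _); apply: eq_count => v /=; rewrite cat_rcons.
Qed.

Lemma filter_words_cons p b k :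
  [seq v <- map (cons b) (words k) | P (p ++ v)] =
  map (cons b) [seq v <- words k | P (rcons p b ++ v)].
Proof. by rewrite filter_map; congr map; apply: eq_filter => v /=; rewrite cat_rcons. Qed.

Lemma rank_true p w :
  rank p (true :: w) = ext (rcons p false) (size w) + rank (rcons p true) w.
Proof.
rewrite /rank /= filter_cat !filter_words_cons index_cat size_map size_filter.
rewrite ifF; last by apply/negbTE/mapP => -[].
by rewrite index_map // => u v [].
Qed.

Lemma rank_false p w : P (p ++ false :: w) ->
  rank p (false :: w) = rank (rcons p false) w.
Proof.
move=> Pw; rewrite /rank /= filter_cat !filter_words_cons index_cat.
rewrite ifT; last by apply/mapP; exists w; rewrite // mem_filter cat_rcons Pw mem_words /=.
by rewrite index_map // => u v [].
Qed.

Lemma rank_falses p i d : P (p ++ nseq i false ++ d) ->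
  rank p (nseq i false ++ d) = rank (p ++ nseq i false) d.
Proof.
elim: i p => [|i IH] p /=; first by rewrite cats0.
by move=> Pd; rewrite rank_false // IH -cats1 -catA.
Qed.

Lemma eq_ext p q : same_ext p q -> ext p =1 ext q.
Proof. by move=> pq k; apply: eq_count => v; apply: pq. Qed.

Lemma eq_rank p q : same_ext p q -> rank p =1 rank q.
Proof. by move=> pq w; rewrite /rank (eq_filter pq). Qed.

Lemma ext_dead p k : (forall v, ~~ P (p ++ v)) -> ext p k = 0.
Proof.
move=> dead; apply/eqP; rewrite -leqn0 leqNgt -has_count.
by apply/hasPn => v _; apply: dead.
Qed.

End Ranking.

Section Avoidance.
Variable x : nat.
Local Notation A := (avoidsT x).
Local Notation ext1 := (ext A [:: true]).

Definition head_free w :=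
  all (fun y => ~~ prefix (pat0 y) w && ~~ prefix (pat1 y) w) (iota 1 x).

Lemma avoidsT_cons b w : A (b :: w) = head_free (b :: w) && A w.
Proof.
rewrite /avoidsT /head_free -all_predI; apply: eq_all => y; cbv beta.
by rewrite !infix_consl !negb_or andbACA.
Qed.

Lemma avoidsT_catr s t : A (s ++ t) -> A t.
Proof.
move=> /allP st; apply/allP => y /st /andP[p0 p1].
by apply/andP; split; [move: p0 | move: p1]; apply: contra; apply: infix_catl.
Qed.

Lemma avoidsT_drop n w : A w -> A (drop n w).
Proof. by rewrite -{1}(cat_take_drop n w); apply: avoidsT_catr. Qed.

Lemma avoidsT_negb w : A (map negb w) = A w.
Proof.
have infix_negb s : infix s (map negb w) = infix (map negb s) w.
  by rewrite -{1}(mapK negbK s) infix_map_inj //; apply: negb_inj.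
apply: eq_all => y; cbv beta.
by rewrite !infix_negb /= !map_cat !map_nseq andbC.
Qed.

Lemma same_ext_dup b : same_ext A [:: b; b] [:: b].
Proof.
move=> v; rewrite /= avoidsT_cons; apply/andb_idl => _.
apply/allP => -[|y]; first by rewrite mem_iota.
by case: b.
Qed.

Lemma same_ext_run b j : same_ext A (nseq j.+1 b) [:: b].
Proof.
elim: j => // j IH v; rewrite -(IH v) /=.
by rewrite -[b :: b :: _]/([:: b; b] ++ _) same_ext_dup.
Qed.

Lemma prefix_short_run b y k w : y <= k ->
  prefix (nseq y b ++ [:: ~~ b]) (nseq k.+1 b ++ w) = false.
Proof.
elim: y k => [|y IH] [|k] // le_yk; try by case: b.
by rewrite prefix_cons eqxx IH.
Qed.

Lemma same_ext_flip_run b : same_ext A (~~ b :: nseq x.+1 b) [:: b].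
Proof.
move=> v; rewrite -(same_ext_run b x v) /= avoidsT_cons; apply/andb_idl => _.
apply/allP => y; rewrite mem_iota add1n ltnS => /andP[_ le_yx].
have := prefix_short_run b v le_yx.
by case: b => /= ->; rewrite ?andbT.
Qed.

Lemma dead_short_run b j v : 0 < j <= x ->
  ~~ A (rcons (~~ b :: nseq j b) (~~ b) ++ v).
Proof.
move=> /andP[j_gt0 le_jx]; rewrite -cats1 -catA avoidsT_cons negb_and.
apply/orP; left; apply/allPn; exists j; first by rewrite mem_iota j_gt0 add1n ltnS.
rewrite negb_and !negbK.
by case: b; apply/orP; [left | right]; apply/prefixP; exists v; rewrite /= -catA.
Qed.

Lemma ext_negb p k : ext A (map negb p) k = ext A p k.
Proof.
elim: k p => [|k IH] p; first by rewrite !ext0 avoidsT_negb.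
by rewrite !extS addnC; congr (_ + _); rewrite -[RHS]IH map_rcons.
Qed.

Lemma ext_false k : ext A [:: false] k = ext1 k.
Proof. exact: (ext_negb [:: true]). Qed.

Lemma ext1S k : ext1 k.+1 = ext A [:: true; false] k + ext1 k.
Proof. by rewrite extS (eq_ext (same_ext_dup true)). Qed.

Lemma ext_forced_zeros i j k : 0 < j -> i + j = x.+1 ->
  ext A (true :: nseq j false) (k + i) = ext1 k.
Proof.
elim: i j => [|i IH] j j_gt0 ij.
  by rewrite add0n in ij; rewrite addn0 ij (eq_ext (same_ext_flip_run false)) ext_false.
have dead v : ~~ A (rcons (true :: nseq j false) true ++ v).
  by apply: (dead_short_run false); lia.
by rewrite addnS extS (ext_dead _ dead) addn0 rcons_cons -nseqSr IH //; lia.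
Qed.

Lemma ext_true_false k : ext A [:: true; false] (k + x) = ext1 k.
Proof. exact: (ext_forced_zeros k (ltn0Sn 0) (addn1 x)). Qed.

Lemma ext1_rec k : ext1 (x + k).+1 = ext1 (x + k) + ext1 k.
Proof. by rewrite addnC ext1S ext_true_false addnC. Qed.

Lemma rank_nil_true w : rank A [::] (true :: w) = ext1 (size w) + rank A [:: true] w.
Proof. by rewrite rank_true ext_false. Qed.

Lemma rank_ones j d :
  rank A [:: true] (nseq j true ++ d) + ext1 (size d) =
  ext1 (j + size d) + rank A [:: true] d.
Proof.
elim: j => [|j IH]; first by rewrite addnC.
rewrite -[nseq j.+1 true ++ d]/(true :: (nseq j true ++ d)) rank_true.
rewrite (eq_rank (same_ext_dup true)) size_cat size_nseq addSn ext1S /=.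
lia.
Qed.

Lemma rank_forced_ones i j d : 0 < j -> i + j = x.+1 ->
  rank A (false :: nseq j true) (nseq i true ++ d) = rank A [:: true] d.
Proof.
elim: i j => [|i IH] j j_gt0 ij.
  by rewrite add0n in ij; rewrite ij (eq_rank (same_ext_flip_run true)).
have dead v : ~~ A (rcons (false :: nseq j true) false ++ v).
  by apply: (dead_short_run true); lia.
rewrite -[nseq i.+1 true ++ d]/(true :: (nseq i true ++ d)) rank_true.
by rewrite (ext_dead _ dead) add0n rcons_cons -nseqSr IH //; lia.
Qed.

Lemma Clist_words k : Clist k x = [seq w <- words k | A w].
Proof. by rewrite /Clist map_bin_iota. Qed.

Lemma mem_Clist k w : (w \in Clist k x) = (size w == k) && A w.
Proof. by rewrite Clist_words mem_filter mem_words andbC. Qed.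

Lemma size_Clist k : size (Clist k x) = ext A [::] k.
Proof. by rewrite Clist_words size_filter. Qed.

Lemma g_rank k w : size w = k -> g k x w = rank A [::] w.
Proof. by move=> <-; rewrite /g Clist_words. Qed.

Lemma N_ext1 k : N k.+1 x = (ext1 k).*2.
Proof.
case: k => [|k]; rewrite /N.
  by rewrite ext0 (_ : A [:: true]) //; apply/allP => -[|y].
rewrite ltz_nat ltnS ltn0Sn size_Clist (extS _ [::]) -[rcons [::] false]/[:: false].
by rewrite ext_false addnn.
Qed.

Lemma N_sub_ext1 m : x < m -> N (m%:Z - x%:Z) x = (ext1 (m - x.+1)).*2.
Proof.
move=> lt_xm; rewrite subzn ?(ltnW lt_xm) // -(N_ext1 (m - x.+1)).
by congr (N (Posz _) x); lia.
Qed.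

Lemma rightmost_Clist k r w : r <= k -> w \in Clist k x -> rightmost r w \in Clist r x.
Proof.
rewrite !mem_Clist => le_rk /andP[/eqP sz Aw].
by rewrite /rightmost size_drop sz subKn // eqxx avoidsT_drop.
Qed.

Lemma Clist_prefix k (p w : seq bool) : w \in Clist k x -> prefix p w ->
  exists d : seq bool, [/\ w = p ++ d, size p + size d = k & A (p ++ d)].
Proof.
rewrite mem_Clist => /andP[/eqP sz Aw] /prefixP[d def_w].
by exists d; rewrite -size_cat -def_w.
Qed.

Lemma g_prefix00 m c' : c' \in Clist m.+1 x -> prefix [:: false; false] c' ->
  g m.+1 x c' = g m x (rightmost m c').
Proof.
move=> /Clist_prefix/[apply] -[d [-> sz Ad]].
have {sz} -> : m = (size d).+1 by move: sz => /=; lia.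
have A0d : A (false :: d) := avoidsT_catr (s := [:: false]) Ad.
rewrite (rightmost_cat [:: false]) // !g_rank //.
by rewrite !rank_false // (eq_rank (same_ext_dup false)).
Qed.

Lemma g_prefix0ones m c' : c' \in Clist m.+1 x -> prefix (false :: nseq x.+1 true) c' ->
  ((g m.+1 x c')%:R : rat) =
  ((g m x (rightmost m c'))%:R - ((N m x)%:R - (N (m%:Z - x%:Z) x)%:R) / 2%:R)%R.
Proof.
move=> /Clist_prefix/[apply] -[d [-> sz Ad]].
have {sz} -> : m = (x + size d).+1 by move: sz; rewrite /= size_nseq; lia.
rewrite (@rightmost_cat _ [:: false] (nseq x.+1 true ++ d)); last first.
  by rewrite size_cat size_nseq.
have sz' : size ((false :: nseq x.+1 true) ++ d) = (x + size d).+2.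
  by rewrite /= size_cat size_nseq.
rewrite (g_rank sz') g_rank ?size_cat ?size_nseq // N_ext1 N_sub_ext1 ?ltnS ?leq_addr //.
rewrite subSS addKn.
have ones_tail : nseq x.+1 true ++ d = true :: (nseq x true ++ d) by [].
have lhs : rank A [::] (false :: nseq x.+1 true ++ d) = ext1 (x + size d) + rank A [:: true] d.
  rewrite rank_false // ones_tail rank_true (eq_ext (same_ext_dup false)) ext_false.
  by rewrite size_cat size_nseq (@rank_forced_ones x 1 d (ltn0Sn 0) (addn1 x)).
have rhs : rank A [::] (nseq x.+1 true ++ d) =
    ext1 (x + size d) + rank A [:: true] (nseq x true ++ d).
  by rewrite ones_tail rank_nil_true size_cat size_nseq.
have /(congr1 (fun k => k%:R : rat)) := rank_ones x d.
by rewrite lhs rhs -!addnn !natrD; lra.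
Qed.

Lemma g_prefix11 m c' : x < m -> c' \in Clist m.+1 x -> prefix [:: true; true] c' ->
  g m.+1 x c' = g m x (rightmost m c') + N (m%:Z - x%:Z) x.
Proof.
move=> lt_xm /Clist_prefix/[apply] -[w [-> sz _]].
have {sz} def_m : m = (size w).+1 by move: sz => /=; lia.
rewrite N_sub_ext1 // def_m subSS (rightmost_cat [:: true]) // !g_rank //.
rewrite !rank_nil_true rank_true (eq_rank (same_ext_dup true)) /= ext1S.
have -> : ext A [:: true; false] (size w) = ext1 (size w - x).
  by rewrite -ext_true_false subnK // -ltnS -def_m.
rewrite -addnn; lia.
Qed.

Lemma g_prefix_ones_zeros m c' y : 2 <= y -> c' \in Clist m.+1 x ->
  prefix (nseq y true ++ nseq x.+1 false) c' ->
  g m.+1 x c' = g m x (rightmost m c') + N (m%:Z - x%:Z) x.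
Proof.
move=> y_ge2 hc' /[dup] pc' /(Clist_prefix hc') [d [def_c' sz _]].
apply: g_prefix11 hc' _; first by move: sz; rewrite size_cat !size_nseq; lia.
by rewrite def_c'; case: y y_ge2 {def_c' sz pc'} => [|[|y]] // _; rewrite /= prefix0s.
Qed.

Lemma g_prefix1zeros m c' : c' \in Clist m.+1 x -> prefix (true :: nseq x.+1 false) c' ->
  ((g m.+1 x c')%:R : rat) =
  ((g (m - x) x (rightmost (m - x) c'))%:R + (N m.+1 x)%:R / 2%:R)%R.
Proof.
move=> /Clist_prefix/[apply] -[d [-> sz Ad]].
have {sz} -> : m = (x + size d).+1 by move: sz; rewrite /= size_nseq; lia.
have -> : (x + size d).+1 - x = (size d).+1 by lia.
rewrite cat_cons in Ad *; rewrite rightmost_run.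
have A0d : A (false :: d) by rewrite -(rightmost_run true false x d) avoidsT_drop.
have sz' : size (true :: nseq x.+1 false ++ d) = (x + size d).+2.
  by rewrite /= size_cat size_nseq.
rewrite (g_rank sz') g_rank // N_ext1 rank_nil_true rank_falses //.
rewrite (eq_rank (same_ext_flip_run false)) rank_false //.
by rewrite [rcons [::] _]/= size_cat size_nseq addSn -addnn !natrD; lra.
Qed.

Lemma g_prefix1ones m c' : c' \in Clist m.+1 x -> prefix (true :: nseq x.+1 true) c' ->
  g m.+1 x c' = g (m - x) x (rightmost (m - x) c') + N m x.
Proof.
move=> /Clist_prefix/[apply] -[d [-> sz _]].
have {sz} -> : m = (x + size d).+1 by move: sz; rewrite /= size_nseq; lia.
have -> : (x + size d).+1 - x = (size d).+1 by lia.
rewrite cat_cons rightmost_run.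
have sz' : size (true :: nseq x.+1 true ++ d) = (x + size d).+2.
  by rewrite /= size_cat size_nseq.
rewrite (g_rank sz') g_rank // N_ext1 !rank_nil_true size_cat size_nseq.
have := rank_ones x.+1 d; have := ext1_rec (size d).
rewrite addSn -addnn; lia.
Qed.

End Avoidance.

Theorem lemma1 (x m : nat) (hx : (1 <= x)%N) (hm : (1 <= m)%N) (c' : seq bool) :
  c' \in Clist m.+1 x ->
  let c := rightmost m c' in
  let c'' := rightmost (m - x) c' in
  c \in Clist m x /\
  (prefix [:: false; false] c' ->
     g m.+1 x c' = g m x c) /\
  (prefix (false :: nseq x.+1 true) c' ->
     (((g m.+1 x c')%:R : rat) =
       (g m x c)%:R - ((N m x)%:R - (N (m%:Z - x%:Z) x)%:R) / 2%:R)%R) /\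
  ((exists y : nat, [/\ (2 <= y)%N, (y <= x.+1)%N &
                        prefix (nseq y true ++ nseq x.+1 false) c']) ->
     g m.+1 x c' = (g m x c + N (m%:Z - x%:Z)%R x)%N) /\
  (prefix (true :: nseq x.+1 false) c' ->
     c'' \in Clist (m - x) x /\
     (((g m.+1 x c')%:R : rat) = (g (m - x)%N x c'')%:R + (N m.+1 x)%:R / 2%:R)%R) /\
  (prefix (true :: nseq x.+1 true) c' ->
     c'' \in Clist (m - x) x /\
     g m.+1 x c' = (g (m - x) x c'' + N m x)%N).
Proof.
move=> hc' c c''.
have hc'' : c'' \in Clist (m - x) x by apply: rightmost_Clist hc'; lia.
split; first exact: rightmost_Clist (leqnSn m) hc'.
split; first exact: g_prefix00.
split; first exact: g_prefix0ones.
split; first by move=> [y [y_ge2 _]]; exact: g_prefix_ones_zeros.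
by split=> hp; split=> //; [exact: g_prefix1zeros | exact: g_prefix1ones].
Qed.
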